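(* Let $k\ge 1$, $d\ge 1$, $n\ge 1$ and $t\ge k$ be integers, and let $F_1,\dots,F_n\subset\mathbb{R}^d$ be sets of $t$ points each (regarded as colour classes). (i) If $n=(k-1)d+1$ and $t=k$, then there is a colourful $k$-partition $A_1,\dots,A_k$ of $F_1,\dots,F_n$ whose convex hulls intersect with equal coefficients. (ii) If $n<(k-1)d+1$, then for every value of $t$ the statement in (i) fails: there exist sets $F_1,\dots,F_n\subset\mathbb{R}^d$ of $t$ points each such that no colourful $k$-partition of them has convex hulls intersecting with equal coefficients.
   Context: A colourful set is a set containing exactly one point from each colour class $F_j$. A colourful $k$-partition of $F_1,\dots,F_n$ is a family of $k$ pairwise disjoint colourful sets $A_1,\dots,A_k$ (even if the classes have more than $k$ points). We write $A_i=\{x^i_j : x^i_j\in F_j,\ j=1,\dots,n\}$. The convex hulls of $A_1,\dots,A_k$ intersect with equal coefficients if there are real numbers $\alpha_1,\dots,\alpha_n\ge 0$ with $\sum_j\alpha_j=1$ such that the point $\sum_{j=1}^n\alpha_j x^i_j$ is the same for all $i=1,\dots,k$. *)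

From HB Require Import structures.
From mathcomp Require Import all_boot all_order all_algebra.
From mathcomp Require Import reals.
Set Implicit Arguments. Unset Strict Implicit. Unset Printing Implicit Defensive.
Import Order.TTheory GRing.Theory Num.Theory.
Local Open Scope ring_scope.

(* A configuration of n colour classes of t points each in R^d:
   F j l is the l-th point of colour class F_j. *)

(* All points are distinct: each F_j is a set of t (distinct) points,
   and the colour classes are pairwise disjoint. *)
Definition distinct_points (R : realType) (d n t : nat)
  (F : 'I_n -> 'I_t -> 'rV[R]_d) : Prop :=
  injective (fun p : 'I_n * 'I_t => F p.1 p.2).

(* A colourful k-partition: A_i = { F j (s i j) : j }, and the A_i are
   pairwise disjoint, i.e. in each class distinct i pick distinct points. *)
Definition colourful_partition (n t k : nat) (s : 'I_k -> 'I_n -> 'I_t) : Prop :=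
  forall j : 'I_n, injective (fun i : 'I_k => s i j).

Definition eq_coeff_intersect (R : realType) (d n t k : nat)
  (F : 'I_n -> 'I_t -> 'rV[R]_d) (s : 'I_k -> 'I_n -> 'I_t) : Prop :=
  exists alpha : 'I_n -> R,
    (forall j, 0 <= alpha j) /\ \sum_(j < n) alpha j = 1 /\
    forall i i' : 'I_k,
      \sum_(j < n) alpha j *: F j (s i j) = \sum_(j < n) alpha j *: F j (s i' j).

From mathcomp Require Import all_boot all_order all_algebra.
From mathcomp Require Import reals.
From mathcomp Require Import lra.
From mathcomp Require Import boolp classical_sets topology normedtype derive.
Set Implicit Arguments. Unset Strict Implicit. Unset Printing Implicit Defensive.
Import Order.TTheory GRing.Theory Num.Theory.
Import numFieldNormedType.Exports.
Local Open Scope ring_scope.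

(* (i) Sarkaria's lifting.  For a colour class F_j and a cyclic shift r of its k
   points, stack the k - 1 differences F_j(i + r) - F_j(k - 1 + r) into one point of
   R^((k-1)d).  The k shifts of a class average to 0, so 0 lies in the convex hull of
   every lifted class, and the colourful Caratheodory theorem in dimension (k-1)d with
   (k-1)d + 1 classes selects a shift c_j per class and weights alpha combining the
   selected points to 0.  Read row by row, this says that all parts
   A_i = {F_j(i + c_j)} have the same alpha-combination.
   Colourful Caratheodory (Barany): take the colourful selection whose convex hull
   comes nearest to 0.  If the nearest point x is not 0, it is (Caratheodory) a
   convex combination with zero weight on some class i.  As 0 is in the hull of
   class i, some point of class i lies strictly on the same side as 0 of the
   hyperplane through x orthogonal to x, and recolouring class i with it brings the
   hull closer to 0.
   (ii) Put the points of F_j on the axis j mod d, at heights separated by factors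
   larger than k.  At most k - 1 classes share an axis, so some part contains the top
   point of none of them; comparing it with the parts containing the top points shows
   that equal coordinates force all weights on that axis to vanish. *)

Section ColourfulCaratheodory.
Variable R : realType.
Local Open Scope classical_set_scope.

Definition simplex m : set 'rV[R]_m :=
  [set v | (forall i, 0 <= v 0 i) /\ \sum_i v 0 i = 1].

Definition comb D m (p : 'I_m -> 'rV[R]_D) (v : 'rV[R]_m) : 'rV[R]_D :=
  \sum_i v 0 i *: p i.

Lemma continuous_sum m (I : Type) (r : seq I) (G : I -> 'rV[R]_m -> R) :
  (forall i, continuous (G i)) -> continuous (fun v => \sum_(i <- r) G i v).
Proof.
move=> HG; elim: r => [|a r IH].
  by under eq_fun do rewrite big_nil; apply: cst_continuous.
under eq_fun do rewrite big_cons.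
by move=> x; apply: continuousD; [apply: HG | apply: IH].
Qed.

Lemma simplex_compact m : compact (@simplex m).
Proof.
pose cube := [set v : 'rV[R]_m | forall i, `[0, 1]%classic (v 0 i)].
apply: (@subclosed_compact _ _ cube).
- have -> : @simplex m = (\bigcap_(i in [set: 'I_m]) [set v : 'rV[R]_m | 0 <= v 0 i])
      `&` ((fun v : 'rV[R]_m => \sum_i v 0 i) @^-1` [set 1 : R]).
    by apply/seteqP; split => v /= [v0 v1]; split => // i *; exact: v0.
  apply: closedI.
    apply: closed_bigI => i _.
    apply: (@preimage_closed _ _ (fun v : 'rV[R]_m => v 0 i) [set x | 0 <= x]).
      by move=> x _; apply: coord_continuous.
    exact: closed_ge.
  apply: preimage_closed; last exact: closed_eq.
  move=> x _; apply: (continuous_sum (G := fun i v => v 0 i)) => i.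
  exact: coord_continuous.
- exact: (@rV_compact R m (fun=> `[(0 : R), 1]%classic)
                      (fun=> @segment_compact R 0 1)).
- move=> v [v0 v1] i /=; rewrite in_itv /= v0 /= -v1 (bigD1 i) //= lerDl.
  exact: sumr_ge0.
Qed.

Lemma simplex_delta m (j : 'I_m) : simplex (delta_mx 0 j).
Proof.
split; first by move=> i; rewrite mxE; case: eqP => _ /=; rewrite ?ler01.
rewrite (bigD1 j) //= mxE !eqxx big1 ?addr0 // => i /negbTE.
by rewrite mxE eq_sym => ->.
Qed.

Lemma simplex_conv m (v w : 'rV[R]_m) s : simplex v -> simplex w -> 0 <= s <= 1 ->
  simplex ((1 - s) *: v + s *: w).
Proof.
move=> [v0 v1] [w0 w1] /andP[s0 s1]; split.
  by move=> i; rewrite !mxE; apply: addr_ge0; apply: mulr_ge0 => //; lra.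
rewrite (eq_bigr (fun i => (1 - s) * v 0 i + s * w 0 i)); last by move=> i _; rewrite !mxE.
by rewrite big_split /= -!mulr_sumr v1 w1; lra.
Qed.

Lemma comb_conv D m (p : 'I_m -> 'rV[R]_D) s (v w : 'rV[R]_m) :
  comb p ((1 - s) *: v + s *: w) = (1 - s) *: comb p v + s *: comb p w.
Proof.
rewrite /comb !scaler_sumr -big_split; apply: eq_bigr => i _.
by rewrite !mxE !scalerA scalerDl.
Qed.

Lemma comb_delta D m (p : 'I_m -> 'rV[R]_D) j : comb p (delta_mx 0 j) = p j.
Proof.
rewrite /comb (bigD1 j) //= mxE !eqxx scale1r big1 ?addr0 // => i /negbTE ij.
by rewrite mxE ij andbF scale0r.
Qed.

Definition dot D (u v : 'rV[R]_D) : R := \sum_(i < D) u 0 i * v 0 i.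

Section Dot.
Variable D : nat.
Implicit Types u v w x : 'rV[R]_D.

Lemma dotC u v : dot u v = dot v u.
Proof. by apply: eq_bigr => i _; rewrite mulrC. Qed.

Lemma dotDl u w v : dot (u + w) v = dot u v + dot w v.
Proof. by rewrite /dot -big_split; apply: eq_bigr => i _; rewrite mxE mulrDl. Qed.

Lemma dotDr u w v : dot v (u + w) = dot v u + dot v w.
Proof. by rewrite dotC dotDl !(dotC v). Qed.

Lemma dotZl a u v : dot (a *: u) v = a * dot u v.
Proof. by rewrite /dot mulr_sumr; apply: eq_bigr => i _; rewrite mxE mulrA. Qed.

Lemma dotZr a u v : dot v (a *: u) = a * dot v u.
Proof. by rewrite dotC dotZl dotC. Qed.

Lemma dot0l v : dot 0 v = 0.
Proof. by apply: big1 => i _; rewrite mxE mul0r. Qed.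

Lemma dotBl u w v : dot (u - w) v = dot u v - dot w v.
Proof. by rewrite dotDl -scaleN1r dotZl mulN1r. Qed.

Lemma dotBr u w v : dot v (u - w) = dot v u - dot v w.
Proof. by rewrite dotC dotBl !(dotC v). Qed.

Lemma dot_sumZr x (I : finType) (mu : I -> R) (p : I -> 'rV[R]_D) :
  dot x (\sum_i mu i *: p i) = \sum_i mu i * dot x (p i).
Proof.
rewrite dotC (big_morph (@dot D ^~ x) (fun u w => dotDl u w x) (dot0l x)).
by apply: eq_bigr => i _; rewrite dotZl dotC.
Qed.

Lemma dot_ge0 u : 0 <= dot u u.
Proof. by apply: sumr_ge0 => i _; rewrite -expr2 sqr_ge0. Qed.

Lemma dot_gt0 u : u != 0 -> 0 < dot u u.
Proof.
move=> u0; rewrite lt_def dot_ge0 andbT; apply: contra u0 => /eqP u2.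
apply/eqP/rowP => i; rewrite mxE.
have sq_ge0 j : xpredT j -> 0 <= u 0 j * u 0 j by rewrite -expr2 sqr_ge0.
have /eqP := @psumr_eq0P _ _ xpredT _ sq_ge0 u2 i isT.
by rewrite mulf_eq0 orbb => /eqP.
Qed.

End Dot.

Lemma sqnorm_segment_lt D (x q : 'rV[R]_D) : dot x (q - x) < 0 ->
  exists2 s, 0 < s <= 1 &
    dot ((1 - s) *: x + s *: q) ((1 - s) *: x + s *: q) < dot x x.
Proof.
set a := dot x (q - x) => a0.
set b := dot (q - x) (q - x).
have b0 : 0 <= b := dot_ge0 _.
pose s := - a / (b - a).
have hs : s * (b - a) = - a by rewrite /s mulfVK // gt_eqF //; lra.
have s0 : 0 < s by rewrite /s divr_gt0 // ?oppr_gt0 //; lra.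
have s1 : s <= 1 by rewrite /s ler_pdivrMr ?mul1r; lra.
exists s; first by rewrite s0 s1.
have -> : (1 - s) *: x + s *: q = x + s *: (q - x).
  by rewrite scalerBl scale1r scalerBr addrA addrAC.
rewrite !dotDl !dotZl !dotDr !dotZr -/a -/b (dotC (q - x) x) -/a.
nra.
Qed.

Lemma sqnorm_comb_decrease D m (p : 'I_m -> 'rV[R]_D) v j :
  simplex v -> dot (comb p v) (p j) < dot (comb p v) (comb p v) ->
  exists2 w, simplex w & dot (comb p w) (comb p w) < dot (comb p v) (comb p v).
Proof.
move=> vS; rewrite -subr_lt0 -dotBr => /sqnorm_segment_lt[s /andP[s0 s1] lt_s].
exists ((1 - s) *: v + s *: delta_mx 0 j); last by rewrite comb_conv comb_delta.
by apply: simplex_conv => //; [exact: simplex_delta | rewrite (ltW s0)].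
Qed.

Definition nearest D m (p : 'I_m -> 'rV[R]_D) (v : 'rV[R]_m) : Prop :=
  simplex v /\
  forall w, simplex w -> dot (comb p v) (comb p v) <= dot (comb p w) (comb p w).

Lemma exists_nearest D m (p : 'I_m.+1 -> 'rV[R]_D) : exists v, nearest p v.
Proof.
have cont : continuous (fun v => dot (comb p v) (comb p v)).
  have coord_cont c : continuous (fun v : 'rV[R]_m.+1 => comb p v 0 c).
    rewrite /comb; under eq_fun do rewrite summxE.
    apply: continuous_sum => i y; under eq_fun do rewrite mxE.
    by apply: continuousM; [apply: coord_continuous | apply: cst_continuous].
  apply: (continuous_sum (G := fun c v => comb p v 0 c * comb p v 0 c)) => c x.
  by apply: continuousM; apply: coord_cont.
have ne : (@simplex m.+1) !=set0 by exists (delta_mx 0 ord0); apply: simplex_delta.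
have [v vS vmin] := @EVT_min_rV R m.+1 _ (@simplex m.+1) ne
  (@simplex_compact m.+1) (continuous_subspaceT cont).
by exists v; split; [move: vS; rewrite inE | move=> w wS; apply: vmin; rewrite inE].
Qed.

Lemma nearest_dot_ge D m (p : 'I_m -> 'rV[R]_D) v :
  nearest p v -> forall j, dot (comb p v) (comb p v) <= dot (comb p v) (p j).
Proof.
move=> [vS vmin] j; rewrite leNgt; apply/negP => /(sqnorm_comb_decrease vS)[w wS].
by rewrite ltNge vmin.
Qed.

Lemma nearest_dot_eq D m (p : 'I_m -> 'rV[R]_D) v :
  nearest p v -> (forall j, 0 < v 0 j) ->
  forall j, dot (comb p v) (p j) = dot (comb p v) (comb p v).
Proof.
move=> vN vpos; have [[_ v1] _] := vN; set x := comb p v.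
have gap_ge0 j : xpredT j -> 0 <= v 0 j * (dot x (p j) - dot x x).
  by move=> _; apply: mulr_ge0; [apply: ltW | rewrite subr_ge0; apply: nearest_dot_ge].
have gap0 : \sum_j v 0 j * (dot x (p j) - dot x x) = 0.
  under eq_bigr do rewrite mulrBr.
  by rewrite sumrB -mulr_suml v1 mul1r {3}/x /comb dot_sumZr subrr.
move=> j; have /eqP := @psumr_eq0P _ _ xpredT _ gap_ge0 gap0 j isT.
by rewrite mulf_eq0 gt_eqF //= subr_eq0 => /eqP.
Qed.

Lemma lin_dep_rV D n (p : 'I_n -> 'rV[R]_D) : (D < n)%N ->
  exists2 mu : 'I_n -> R, (exists i, mu i != 0) & \sum_i mu i *: p i = 0.
Proof.
move=> Dn; pose M := \matrix_i p i.
have [i ri] : exists i, row i (kermx M) != 0.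
  apply/existsP; apply: contraTT Dn; rewrite negb_exists -leqNgt => /forallP ker0.
  have : \rank (kermx M) == 0%N.
    by rewrite mxrank_eq0; apply/eqP/row_matrixP => j; rewrite row0; apply/eqP/negPn; apply: ker0.
  by rewrite mxrank_ker subn_eq0 => /leq_trans; apply; apply: rank_leq_col.
exists (fun j => row i (kermx M) 0 j).
  apply/existsP; apply: contraR ri; rewrite negb_exists => /forallP ri0.
  by apply/eqP/rowP => j; rewrite [RHS]mxE; apply/eqP/negPn; apply: ri0.
have vM : row i (kermx M) *m M = 0 by rewrite -row_mul mulmx_ker row0.
by rewrite -[RHS]vM mulmx_sum_row; apply: eq_bigr => j _; rewrite rowK.
Qed.

Lemma comb_drop_coord D m (p : 'I_m -> 'rV[R]_D) (y : 'rV[R]_D) v :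
  (D < m)%N -> (forall j, dot y (p j) = 1) -> simplex v ->
  exists2 w, simplex w & (exists i, w 0 i = 0) /\ comb p w = comb p v.
Proof.
move=> Dm y1 [v0 v1]; have [mu [j1 mu_j1] mu_p] := lin_dep_rV p Dm.
have sum_mu : \sum_j mu j = 0.
  have := dot_sumZr y mu p; rewrite mu_p dotC dot0l.
  by under eq_bigr do rewrite y1 mulr1.
have [j2 mu_j2] : exists j, 0 < mu j.
  apply/existsP; apply: contraTT mu_j1; rewrite negb_exists => /forallP mu_le0.
  have mu_le0' j : xpredT j -> 0 <= - mu j by rewrite oppr_ge0 leNgt mu_le0.
  have /eqP := @psumr_eq0P _ _ xpredT _ mu_le0' ltac:(by rewrite sumrN sum_mu oppr0) j1 isT.
  by rewrite oppr_eq0 negbK.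
(* the largest step along -mu that keeps all weights nonnegative *)
pose j0 := [arg min_(j < j2 | 0 < mu j) (v 0 j / mu j)]%O.
have [mu_j0 j0_min] : 0 < mu j0 /\ forall j, 0 < mu j -> v 0 j0 / mu j0 <= v 0 j / mu j.
  by rewrite /j0; case: arg_minP => // j mu_j j_min; split => // j' /j_min.
pose tau := v 0 j0 / mu j0.
have tau0 : 0 <= tau by rewrite divr_ge0 // ltW.
exists (\row_j (v 0 j - tau * mu j)); last split.
- split; last first.
    under eq_bigr do rewrite mxE.
    by rewrite sumrB -mulr_sumr sum_mu mulr0 subr0.
  move=> j; rewrite mxE subr_ge0; case: (ltP 0 (mu j)) => [mu_j | mu_le0].
    by rewrite -ler_pdivlMr // j0_min.
  by apply: le_trans (v0 j); rewrite mulr_ge0_le0.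
- by exists j0; rewrite mxE /tau mulfVK ?subrr // gt_eqF.
- rewrite /comb; under eq_bigr do rewrite mxE scalerBl -scalerA.
  by rewrite sumrB -scaler_sumr mu_p scaler0 subr0.
Qed.

Lemma nearest_zero_coord D m (p : 'I_m -> 'rV[R]_D) v :
  (D < m)%N -> nearest p v -> comb p v != 0 ->
  exists2 w, simplex w & (exists i, w 0 i = 0) /\ comb p w = comb p v.
Proof.
move=> Dm vN x0; have [vS _] := vN.
have [i0 /eqP v_i0 | v_pos] := pickP (fun i => v 0 i == 0).
  by exists v => //; split => //; exists i0.
apply: (comb_drop_coord (y := (dot (comb p v) (comb p v))^-1 *: comb p v)) => // j.
have v_gt0 i : 0 < v 0 i by rewrite lt_def v_pos (proj1 vS).
by rewrite dotZl (nearest_dot_eq vN v_gt0) mulVf // gt_eqF // dot_gt0.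
Qed.

Lemma dot_comb_lt_vertex D m (x : 'rV[R]_D) (p : 'I_m -> 'rV[R]_D) v a :
  simplex v -> dot x (comb p v) < a -> exists j, dot x (p j) < a.
Proof.
move=> [v0 v1] lt_a.
have [j lt_j | ge_a] := pickP (fun j => dot x (p j) < a); first by exists j.
move: lt_a; rewrite ltNge /comb dot_sumZr -[a in a <= _]mul1r -v1 mulr_suml => /negP[].
by apply: ler_sum => j _; rewrite ler_wpM2l // leNgt ge_a.
Qed.

Theorem colourful_caratheodory D n m (P : 'I_n -> 'I_m -> 'rV[R]_D) : (D < n)%N ->
  (forall j, exists2 beta, simplex beta & comb (P j) beta = 0) ->
  exists c : 'I_n -> 'I_m, exists2 al, simplex al & comb (fun j => P j (c j)) al = 0.
Proof.
case: n P => [//|n] P Dn hull0.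
case: m P hull0 => [|m] P hull0.
  have [beta [_ beta1] _] := hull0 ord0.
  by move: beta1; rewrite big_ord0 => /eqP; rewrite eq_sym oner_eq0.
pose pts (c : {ffun 'I_n.+1 -> 'I_m.+1}) j := P j (c j).
have /choice[f fN] : forall c, exists v, nearest (pts c) v.
  by move=> c; apply: exists_nearest.
pose dist c := dot (comb (pts c) (f c)) (comb (pts c) (f c)).
pose c0 := [arg min_(c < [ffun=> ord0]) dist c]%O.
have c0_min c : dist c0 <= dist c by rewrite /c0; case: arg_minP => // c' _; apply.
set x := comb (pts c0) (f c0).
have [x0 | xn0] := eqVneq x 0; first by exists c0, (f c0); [case: (fN c0) | apply: x0].
have [w wS [[i w_i] wx]] := nearest_zero_coord Dn (fN c0) xn0.
rewrite -/x in wx.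
have [beta betaS beta0] := hull0 i.
have [r x_r] : exists r, dot x (P i r) < dot x x.
  by apply: (dot_comb_lt_vertex betaS); rewrite beta0 dotC dot0l dot_gt0.
pose c' := [ffun j => if j == i then r else c0 j].
have wx' : comb (pts c') w = x.
  rewrite -wx /comb; apply: eq_bigr => j _; rewrite /pts ffunE.
  by case: eqVneq => [->|//]; rewrite w_i !scale0r.
have x_r' : dot (comb (pts c') w) (pts c' i) < dot (comb (pts c') w) (comb (pts c') w).
  by rewrite wx' /pts ffunE eqxx.
have [w' w'S] := sqnorm_comb_decrease wS x_r'; rewrite wx'.
by rewrite ltNge (le_trans (c0_min c') ((fN c').2 _ w'S)).
Qed.

End ColourfulCaratheodory.
Lemma separated_weights_eq0 (R : realType) (k n : nat) (J : {set 'I_n})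
    (a : 'I_n -> 'I_k -> R) (al : 'I_n -> R) :
  (#|J| < k)%N -> (forall j i, 0 < a j i) -> (forall j, injective (a j)) ->
  (forall j i i', a j i < a j i' -> k%:R * a j i <= a j i') ->
  (forall j, 0 <= al j) ->
  (forall i i', \sum_(j in J) al j * a j i = \sum_(j in J) al j * a j i') ->
  forall j, j \in J -> al j = 0.
Proof.
case: k a => [//|k] a card_J a_gt0 a_inj sep al0 eq_sums.
pose top j := [arg max_(i > ord0) a j i]%O.
have [b] : exists b, b \in ~: [set top j | j in J].
  apply/set0Pn; rewrite -card_gt0 -(ltn_add2l #|[set top j | j in J]|) addn0.
  by rewrite cardsC card_ord (leq_ltn_trans (leq_imset_card _ _) card_J).
rewrite inE => b_top.
have sep_top j : j \in J -> k.+1%:R * a j b <= a j (top j).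
  move=> jJ; apply: sep; rewrite lt_neqAle.
  have -> : a j b <= a j (top j) by rewrite /top; case: arg_maxP => // i _; apply.
  rewrite andbT; apply: contraNneq b_top => /a_inj ->.
  by apply: imset_f.
pose gap j := \sum_(j' in J) (a j (top j') - a j b).
have gap_gt0 j : j \in J -> 0 < gap j.
  move=> jJ; rewrite /gap sumrB sumr_const -mulr_natr (bigD1 j) //=.
  have rest_ge0 : 0 <= \sum_(j' in J | j' != j) a j (top j').
    by apply: sumr_ge0 => j' _; apply: ltW.
  have card_le : #|J|%:R * a j b <= k%:R * a j b.
    by rewrite ler_pM2r // ler_nat -ltnS.
  have := sep_top j jJ; have := a_gt0 j b; rewrite -natr1 mulrDl mul1r.
  lra.
have sum_gap : \sum_(j in J) al j * gap j = 0.
  transitivity (\sum_(j' in J) (\sum_(j in J) al j * a j (top j') -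
                                \sum_(j in J) al j * a j b)).
    under eq_bigr do rewrite mulr_sumr.
    rewrite exchange_big; apply: eq_bigr => j' _.
    by rewrite -sumrB; apply: eq_bigr => j _; rewrite mulrBr.
  by apply: big1 => j' _; rewrite (eq_sums _ b) subrr.
move=> j jJ; have al_gap_ge0 i : i \in J -> 0 <= al i * gap i.
  by move=> iJ; rewrite mulr_ge0 // ltW // gap_gt0.
have /eqP := psumr_eq0P al_gap_ge0 sum_gap jJ.
by rewrite mulf_eq0 (gt_eqF (gap_gt0 j jJ)) orbF => /eqP.
Qed.

Lemma card_mod_class (m d n c : nat) : (0 < d)%N -> (n <= m * d)%N ->
  (#|[set j : 'I_n | (j %% d)%N == c]| <= m)%N.
Proof.
move=> d0 nle; have lt_m (j : 'I_n) : (j %/ d < m)%N.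
  by rewrite ltn_divLR // (leq_trans (ltn_ord j)).
rewrite -[m in (_ <= m)%N]card_ord -(@card_in_imset _ _ (fun j => Ordinal (lt_m j))).
  exact: max_card.
move=> j1 j2; rewrite !inE => /eqP c1 /eqP c2 /(congr1 val) /= E; apply: val_inj.
by rewrite /= (divn_eq j1 d) (divn_eq j2 d) E c1 c2.
Qed.

Section AxisConfiguration.
Variables (R : realType) (d t k : nat).

Definition height (j l : nat) : R := k.+2%:R ^+ (j * t + l)%N.

Definition axis_point (j l : nat) : 'rV[R]_d :=
  \row_(c < d) (if c == (j %% d)%N :> nat then height j l else 0).

Lemma height_gt0 j l : 0 < height j l.
Proof. by rewrite exprn_gt0 // ltr0n. Qed.

Lemma height_lt j l l' : (l < l')%N -> k%:R * height j l <= height j l'.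
Proof.
move=> ll'; rewrite /height.
have step : (k%:R : R) * k.+2%:R ^+ (j * t + l)%N <= k.+2%:R ^+ (j * t + l)%N.+1.
  by rewrite exprS ler_pM2r ?exprn_gt0 // ler_nat leqW.
by apply: le_trans step _; rewrite ler_eXn2l ?ltr1n // -addnS leq_add2l.
Qed.

Lemma height_inj j l j' l' : (l < t)%N -> (l' < t)%N ->
  height j l = height j' l' -> j = j' /\ l = l'.
Proof.
move=> lt lt' E.
have {}E : (j * t + l = j' * t + l')%N.
  by apply: (ieexprIn _ _ E); rewrite ?ltr0n ?pnatr_eq1.
have t0 : (0 < t)%N := leq_ltn_trans (leq0n l) lt.
split; last by move: (congr1 (modn^~ t) E); rewrite !modnMDl !modn_small.
by move: (congr1 (divn^~ t) E); rewrite !divnMDl // !divn_small // !addn0.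
Qed.

Lemma axis_point_inj j l j' l' : (0 < d)%N -> (l < t)%N -> (l' < t)%N ->
  axis_point j l = axis_point j' l' -> j = j' /\ l = l'.
Proof.
move=> d0 lt lt' /rowP /(_ (Ordinal (ltn_pmod j d0))); rewrite !mxE /= eqxx.
case: eqP => [_ | _ h0]; last by move: (height_gt0 j l); rewrite h0 ltxx.
exact: height_inj.
Qed.

Lemma axis_comb_coord n (al : 'I_n -> R) (l : 'I_n -> nat) (c : 'I_d) :
  (\sum_j al j *: axis_point j (l j)) 0 c
  = \sum_(j in [set j : 'I_n | (j %% d)%N == c]) al j * height j (l j).
Proof.
rewrite summxE [RHS]big_mkcond; apply: eq_bigr => j _.
by rewrite !mxE inE eq_sym; case: eqP; rewrite ?mulr0.
Qed.

Lemma axis_config_no_eq_coeff n (s : 'I_k -> 'I_n -> 'I_t) :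
  (0 < k)%N -> (0 < d)%N -> (n <= (k - 1) * d)%N -> colourful_partition s ->
  ~ eq_coeff_intersect (fun (j : 'I_n) (l : 'I_t) => axis_point j l) s.
Proof.
move=> k0 d0 nle s_inj [al [al0 [al1 eq_al]]].
have al_eq0 j : al j = 0.
  pose c := Ordinal (ltn_pmod j d0).
  apply: (@separated_weights_eq0 R k n [set j' : 'I_n | (j' %% d)%N == c]
            (fun j' i => height j' (s i j')) al) => //.
  - by apply: leq_ltn_trans (card_mod_class _ d0 nle) _; rewrite ltn_subrL k0.
  - by move=> j' i; apply: height_gt0.
  - move=> j' i i' /height_inj [//|//|_ /val_inj]; exact: s_inj.
  - by move=> j' i i'; rewrite ltr_eXn2l ?ltr1n // ltn_add2l; apply: height_lt.
  - by move=> i i'; rewrite -!axis_comb_coord (eq_al i i').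
  - by rewrite inE.
by move: al1; rewrite big1 // => /eqP; rewrite eq_sym oner_eq0.
Qed.

End AxisConfiguration.

Section SarkariaLift.
Variables (R : realType) (k d n : nat) (F : 'I_n -> 'I_k.+1 -> 'rV[R]_d).

Definition lift_point (j : 'I_n) (r : 'I_k.+1) : 'rV[R]_(k * d) :=
  mxvec (\matrix_(i < k) (F j (widen_ord (leqnSn k) i + r) - F j (ord_max + r))).

Lemma lift_hull0 j : exists2 beta, simplex beta & comb (lift_point j) beta = 0.
Proof.
exists (const_mx k.+1%:R^-1).
  split=> [i|]; first by rewrite mxE invr_ge0 ler0n.
  under eq_bigr do rewrite mxE.
  by rewrite sumr_const card_ord -[LHS]mulr_natl mulfV // pnatr_eq0.
rewrite /comb; under eq_bigr do rewrite mxE.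
rewrite -scaler_sumr /lift_point -linear_sum /=.
suff -> : \sum_r (\matrix_(i < k) (F j (widen_ord (leqnSn k) i + r) - F j (ord_max + r)))
  = 0 :> 'M_(k, d) by rewrite linear0 scaler0.
have shift_sum (a : 'I_k.+1) : \sum_r F j (a + r) = \sum_r F j r.
  by rewrite [RHS](reindex_inj (addrI a)).
apply/row_matrixP => i; rewrite row0 linear_sum /=.
under eq_bigr do rewrite rowK.
by rewrite sumrB !shift_sum subrr.
Qed.

Lemma lift_comb_eq0 (c : 'I_n -> 'I_k.+1) (al : 'rV[R]_n) :
  comb (fun j => lift_point j (c j)) al = 0 ->
  forall i, \sum_j al 0 j *: F j (i + c j) = \sum_j al 0 j *: F j (ord_max + c j).
Proof.
rewrite /comb /lift_point.
under eq_bigr do rewrite -linearZ.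
rewrite -linear_sum /= => /eqP; rewrite mxvec_eq0 => /eqP comb0 i.
have [i_lt | i_ge] := ltnP i k; last first.
  by have -> : i = ord_max by apply/val_inj/eqP; rewrite eqn_leq i_ge andbT -ltnS ltn_ord.
have /eqP := congr1 (row (Ordinal i_lt)) comb0.
rewrite row0 linear_sum /=.
under eq_bigr do rewrite linearZ /= rowK scalerBr.
rewrite sumrB subr_eq0 => /eqP <-.
by apply: eq_bigr => j _; congr (_ *: F j (_ + _)); apply: val_inj.
Qed.

End SarkariaLift.

Theorem theorem1 (R : realType) (k d : nat) :
  (1 <= k)%N -> (1 <= d)%N ->
  (forall (n t : nat) (F : 'I_n -> 'I_t -> 'rV[R]_d),
      n = ((k - 1) * d + 1)%N -> t = k -> distinct_points F ->
      exists s : 'I_k -> 'I_n -> 'I_t,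
        colourful_partition s /\ eq_coeff_intersect F s)
  /\
  (forall n t : nat,
      (1 <= n)%N -> (n < (k - 1) * d + 1)%N -> (k <= t)%N ->
      exists F : 'I_n -> 'I_t -> 'rV[R]_d,
        distinct_points F /\
        forall s : 'I_k -> 'I_n -> 'I_t,
          colourful_partition s -> ~ eq_coeff_intersect F s).
Proof.
move=> k_gt0 d_gt0; split.
  move=> n t F En tk _; subst n t; case: k k_gt0 F => [//|k] _ F.
  have Dn : (k * d < (k.+1 - 1) * d + 1)%N by rewrite subn1 addn1.
  have [c [al alS al0]] := colourful_caratheodory Dn (lift_hull0 F).
  exists (fun i j => i + c j); split; first by move=> j; apply: addIr.
  exists (fun j => al 0 j); split; first by case: alS.
  split; first by case: alS.
  by move=> i i'; rewrite !(lift_comb_eq0 al0).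
move=> n t _; rewrite addn1 ltnS => n_le _.
exists (fun (j : 'I_n) (l : 'I_t) => axis_point R d t k j l); split.
  move=> [j l] [j' l'] /= /axis_point_inj[//|//|//|jj ll].
  by congr (_, _); apply: val_inj.
by move=> s; apply: axis_config_no_eq_coeff.
Qed.
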